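(* Let $X$ be a real normed space and $\mathcal M=\{M_1,\dots,M_n\}$ a finite family of nonempty closed bounded convex subsets of $X$, with $\Sigma(\mathcal M)\neq\emptyset$ and $d=(d_1,\dots,d_n)\in\Omega(\mathcal M)$. Then for every $K\in\Sigma_d(\mathcal M)$ there exists $i$ with $d_i=\sup_{x\in M_i}|x\,K|$.
   Context: For $p\in X$ and $A\subset X$: $|p\,A|=\inf_{a\in A}|p\,a|$ ($=\infty$ if $A=\emptyset$). For nonempty $A,B$, $d_H(A,B)=\max\{\sup_{a\in A}|a\,B|,\sup_{b\in B}|b\,A|\}\in[0,\infty]$. Let $\mathcal P^f_{\mathrm{Cl}}(X)$ be the set of all nonempty closed $Y\subset X$ with $d_H(Y,M_1)<\infty$ (the finiteness class of the $M_i$). $S_{\mathcal M}(Y)=\sum_i d_H(Y,M_i)$; $\Sigma(\mathcal M)$ is the set of minimizers of $S_{\mathcal M}$ over $\mathcal P^f_{\mathrm{Cl}}(X)$; for $K\in\Sigma(\mathcal M)$, $d(K)=(d_H(K,M_1),\dots,d_H(K,M_n))$; $\Omega(\mathcal M)=\{d(K):K\in\Sigma(\mathcal M)\}$; for $d\in\Omega(\mathcal M)$, $\Sigma_d(\mathcal M)=\{K\in\Sigma(\mathcal M):d(K)=d\}$. *)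

From HB Require Import structures.
From mathcomp Require Import all_boot all_order all_algebra.
From mathcomp Require Import all_classical all_reals all_analysis.
Set Implicit Arguments. Unset Strict Implicit. Unset Printing Implicit Defensive.
Import Order.TTheory GRing.Theory Num.Theory.
Import numFieldNormedType.Exports.
Local Open Scope classical_set_scope.
Local Open Scope ring_scope.
Local Open Scope ereal_scope.

Section Hausdorff.
Context {R : realType} {X : normedModType R}.

(* |p A| = inf_{a in A} |p - a|, equal to +oo when A is empty *)
Definition dist_pt (p : X) (A : set X) : \bar R :=
  ereal_inf [set (`|p - a|)%:E | a in A].

Definition hausdorff (A B : set X) : \bar R :=
  maxe (ereal_sup [set dist_pt a B | a in A])
       (ereal_sup [set dist_pt b A | b in B]).

Definition PfCl (M1 : set X) : set (set X) :=
  [set Y | Y !=set0 /\ closed Y /\ hausdorff Y M1 < +oo].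

Variable n : nat.
Variable M : 'I_n -> set X.
Variable M1 : set X. (* the first member of the family *)

Definition S_M (Y : set X) : \bar R := \sum_(i < n) hausdorff Y (M i).

Definition Sigma : set (set X) :=
  [set K | PfCl M1 K /\ forall Y, PfCl M1 Y -> S_M K <= S_M Y].

Definition dvec (K : set X) : 'I_n -> \bar R := fun i => hausdorff K (M i).

Definition Omega : set ('I_n -> \bar R) := [set dvec K | K in Sigma].

Definition Sigma_d (d : 'I_n -> \bar R) : set (set X) :=
  [set K | Sigma K /\ dvec K = d].

End Hausdorff.

(** Suppose that for every [i] the excess [sup_{x in M_i} |x K|] is strictly
smaller than [d_i], so that [d_i = sup_{k in K} |k M_i|] for all [i].  Pick
[p in K] close to a point of [M_1] and shrink [K] towards [p]:
[Y = (1 - t) K + t p].  Since [x |-> |x M_i|] is convex, the excess of [Y] over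
[M_i] is at most [(1 - t) d_i + t |p M_i|] (and strictly less than [d_1] for
[i = 1]), while the excess of [M_i] over [Y] grows by at most [t diam K], which
is absorbed by the gap [d_i - sup_{x in M_i} |x K|] for small [t].  Hence
[S(Y) < S(K)], contradicting the minimality of [K]. *)

From HB Require Import structures.
From mathcomp Require Import all_boot all_order all_algebra.
From mathcomp Require Import all_classical all_reals all_analysis.
From mathcomp Require Import lra.
Import Order.TTheory GRing.Theory Num.Theory.
Import numFieldNormedType.Exports.
Local Open Scope classical_set_scope.
Local Open Scope ring_scope.

Lemma exists_small_pos {R : realType} {I : finType} (D : R) {f : I -> R} :
  (forall i, 0 < f i) -> exists t, 0 < t < 1 /\ forall i, t * D < f i.
Proof.
move=> f_gt0; apply: (filter_ex (F := (0 : R)^'+)).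
have tD_cvg0 : (fun t => t * D) @ 0^'+ --> (0 : R).
  apply: cvg_at_right_filter; rewrite -{2}(mul0r D).
  by apply: cvgMr_tmp; exact: cvg_id.
near=> t; split.
  by apply/andP; split; near: t; [exact: nbhs_right_gt | exact: nbhs_right_lt].
by near: t; apply: filter_forall => i; exact: (cvgr_lt _ tD_cvg0).
Unshelve. all: by end_near.
Qed.

Lemma maxe_neqr {R : realType} (x y : \bar R) : maxe x y <> y -> (y < x)%E.
Proof. by rewrite ltNge => neq; apply/negP => /max_r. Qed.

Section Distance.
Context {R : realType} {X : normedModType R}.
Implicit Types (A B K : set X) (x y p : X).

Lemma convex_set_conv {A x y} {t : R} : @convex_set R X A ->
  0 <= t -> t <= 1 -> A x -> A y -> A (t *: x + (1 - t) *: y).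
Proof.
by move=> convA t0 t1 Ax Ay; have := convA x y (Itv01 t0 t1); rewrite !inE; apply.
Qed.

Lemma bounded_set_normP {A} : bounded_set A -> exists r, forall x, A x -> `|x| <= r.
Proof. by move=> [r [_ Ar]]; exists (r + 1) => x; apply: Ar; rewrite ltrDl. Qed.

Lemma dist_pt_ge0 x A : (0 <= dist_pt x A)%E.
Proof. by apply: le_ereal_inf_tmp => _ [a _ <-]; rewrite lee_fin. Qed.

Lemma dist_pt_le x {A a} : A a -> (dist_pt x A <= (`|x - a|)%:E)%E.
Proof. by move=> Aa; apply: ereal_inf_lbound; exists a. Qed.

(* [dist_pt] is finite on nonempty sets; [rdist_pt x set0] is the junk value [0]. *)
Definition rdist_pt x A : R := fine (dist_pt x A).

Lemma rdist_ptE x A : A !=set0 -> dist_pt x A = (rdist_pt x A)%:E.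
Proof.
move=> [a Aa]; rewrite /rdist_pt fineK// ge0_fin_numE ?dist_pt_ge0//.
exact: le_lt_trans (dist_pt_le x Aa) (ltry _).
Qed.

Lemma rdist_pt_le x {A a} : A a -> rdist_pt x A <= `|x - a|.
Proof. by move=> Aa; rewrite -lee_fin -rdist_ptE ?dist_pt_le//; exists a. Qed.

Lemma rdist_pt_glb x A c :
  A !=set0 -> (forall a, A a -> c <= `|x - a|) -> c <= rdist_pt x A.
Proof.
move=> A0 lb; rewrite -lee_fin -rdist_ptE//.
by apply: le_ereal_inf_tmp => _ [a Aa <-]; rewrite lee_fin lb.
Qed.

Lemma rdist_pt_lt x {A c} :
  A !=set0 -> rdist_pt x A < c -> exists2 a, A a & `|x - a| < c.
Proof.
move=> A0 ltc; apply: contrapT => nex; move: ltc; apply/negP; rewrite -leNgt.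
by apply: rdist_pt_glb => // a Aa; rewrite leNgt; apply/negP => lt; apply: nex; exists a.
Qed.

Lemma convex_rdist_pt {A} x y {s : R} : @convex_set R X A -> A !=set0 ->
  0 <= s -> s <= 1 ->
  rdist_pt (s *: x + (1 - s) *: y) A <= s * rdist_pt x A + (1 - s) * rdist_pt y A.
Proof.
move=> convA A0 s0 s1; set z := s *: x + (1 - s) *: y.
apply/ler_addgt0Pr => e e0.
have [a Aa xa] : exists2 a, A a & `|x - a| < rdist_pt x A + e.
  by apply: rdist_pt_lt => //; rewrite ltrDl.
have [b Ab yb] : exists2 b, A b & `|y - b| < rdist_pt y A + e.
  by apply: rdist_pt_lt => //; rewrite ltrDl.
have zab : z - (s *: a + (1 - s) *: b) = s *: (x - a) + (1 - s) *: (y - b).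
  by rewrite /z !scalerBr opprD !addrA; congr (_ + _); rewrite addrAC.
apply: le_trans (rdist_pt_le z (convex_set_conv convA s0 s1 Aa Ab)) _.
rewrite zab; apply: le_trans (ler_normD _ _) _.
rewrite !normrZ !ger0_norm ?subr_ge0//.
have s1' : 0 <= 1 - s by rewrite subr_ge0.
have /(ler_wpM2l s0) xa' := ltW xa.
have /(ler_wpM2l s1') yb' := ltW yb.
by apply: le_trans (lerD xa' yb') _; lra.
Qed.

Definition excess A B : \bar R := ereal_sup [set dist_pt a B | a in A].

Lemma hausdorffE A B : hausdorff A B = maxe (excess A B) (excess B A).
Proof. by []. Qed.

Lemma dist_pt_le_excess {A} B {a} : A a -> (dist_pt a B <= excess A B)%E.
Proof. by move=> Aa; apply: ereal_sup_ubound; exists a. Qed.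

Lemma ge_excess A B c : (forall a, A a -> dist_pt a B <= c)%E -> (excess A B <= c)%E.
Proof. by move=> ub; apply: ge_ereal_sup => _ [a Aa <-]; exact: ub. Qed.

Lemma excess_ge0 A B : A !=set0 -> (0 <= excess A B)%E.
Proof.
by move=> [a Aa]; exact: le_trans (dist_pt_ge0 a B) (dist_pt_le_excess B Aa).
Qed.

Lemma rdist_pt_le_excess {A B a c} :
  B !=set0 -> (excess A B <= c%:E)%E -> A a -> rdist_pt a B <= c.
Proof.
move=> B0 le_c Aa; rewrite -lee_fin -rdist_ptE//.
exact: le_trans (dist_pt_le_excess B Aa) le_c.
Qed.

Lemma excess_fin_num {A B rA rB} :
  (forall a, A a -> `|a| <= rA) -> (forall b, B b -> `|b| <= rB) ->
  A !=set0 -> B !=set0 -> excess A B \is a fin_num.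
Proof.
move=> Ar Br A0 [b Bb]; rewrite ge0_fin_numE ?excess_ge0//.
apply: (@le_lt_trans _ _ (rA + rB)%:E); last exact: ltry.
apply: ge_excess => a Aa; apply: le_trans (dist_pt_le a Bb) _.
by rewrite lee_fin; apply: le_trans (ler_normB _ _) _; apply: lerD; auto.
Qed.

Lemma norm_bounded_of_excess K {B rB} : (forall b, B b -> `|b| <= rB) ->
  B !=set0 -> (excess K B < +oo)%E -> exists r, forall k, K k -> `|k| <= r.
Proof.
move=> Br B0; case eKB : (excess K B) => [c| |]// _.
- exists (rB + (c + 1)) => k Kk.
  have /(rdist_pt_lt k B0) [b Bb kb] : rdist_pt k B < c + 1.
    by rewrite ltr_pwDr// (rdist_pt_le_excess B0 _ Kk)// eKB.
  have -> : k = b + (k - b) by rewrite addrC subrK.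
  by apply: le_trans (ler_normD _ _) _; apply: lerD; [exact: Br | exact: ltW].
- exists 0 => k Kk; have := dist_pt_le_excess B Kk; rewrite eKB leeNy_eq.
  by move/eqP => dist_Ny; have := dist_pt_ge0 k B; rewrite dist_Ny.
Qed.

Definition homothety K p (t : R) := [set (1 - t) *: k + t *: p | k in K].

Lemma closed_homothety K p (t : R) : t != 1 -> closed K -> closed (homothety K p t).
Proof.
move=> t1 clK; have t1' : 1 - t != 0 by rewrite subr_eq0 eq_sym.
have -> : homothety K p t = (fun y => (1 - t)^-1 *: (y - t *: p)) @^-1` K.
  apply/seteqP; split=> [_ [k Kk <-]|y Ky].
    by rewrite /preimage /= addrK scalerA mulVf// scale1r.
  by exists ((1 - t)^-1 *: (y - t *: p)) => //; rewrite scalerA divff// scale1r subrK.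
apply: preimage_closed => // y _.
apply: (continuous_comp (f := fun y => y - t *: p)); last exact: scaler_continuous.
by apply: continuousB; [exact: cvg_id | exact: cvg_cst].
Qed.

Lemma excess_homothety_le A K p (t a : R) : @convex_set R X A -> A !=set0 ->
  0 <= t -> t <= 1 -> (excess K A <= a%:E)%E ->
  (excess (homothety K p t) A <= ((1 - t) * a + t * rdist_pt p A)%:E)%E.
Proof.
move=> convA A0 t0 t1 eKA; apply: ge_excess => _ [k Kk <-].
rewrite rdist_ptE// lee_fin.
have s0 : 0 <= 1 - t by rewrite subr_ge0.
have s1 : 1 - t <= 1 by rewrite lerBlDr lerDl.
have := convex_rdist_pt k p convA A0 s0 s1; rewrite subKr => conv.
apply: le_trans conv _; rewrite lerD2r ler_wpM2l//.
exact: rdist_pt_le_excess eKA Kk.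
Qed.

Lemma excess_to_homothety_le A K p (t b D : R) : K !=set0 -> 0 <= t ->
  (forall k, K k -> `|k - p| <= D) -> (excess A K <= b%:E)%E ->
  (excess A (homothety K p t) <= (b + t * D)%:E)%E.
Proof.
move=> K0 t0 KD eAK; have [k0 Kk0] := K0.
have Y0 : homothety K p t !=set0 by exists ((1 - t) *: k0 + t *: p), k0.
apply: ge_excess => y Ay; rewrite rdist_ptE// lee_fin -lerBlDr.
apply: le_trans (rdist_pt_le_excess K0 eAK Ay).
apply: rdist_pt_glb => // k Kk; rewrite lerBlDr.
have Yk : homothety K p t ((1 - t) *: k + t *: p) by exists k.
apply: le_trans (rdist_pt_le y Yk) _.
have -> : y - ((1 - t) *: k + t *: p) = (y - k) + t *: (k - p).
  by rewrite scalerBl scale1r scalerBr opprD opprB !addrA (addrAC y).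
apply: le_trans (ler_normD _ _) _; rewrite lerD2l normrZ ger0_norm//.
by apply: ler_wpM2l => //; exact: KD.
Qed.

Lemma hausdorff_homothety_le {A K} p {t a b D : R} :
  @convex_set R X A -> A !=set0 -> K !=set0 -> 0 <= t -> t <= 1 ->
  (forall k, K k -> `|k - p| <= D) ->
  (excess K A <= a%:E)%E -> (excess A K <= b%:E)%E ->
  (hausdorff (homothety K p t) A
     <= (Num.max ((1 - t) * a + t * rdist_pt p A) (b + t * D))%:E)%E.
Proof.
move=> convA A0 K0 t0 t1 KD eKA eAK; rewrite hausdorffE EFin_max.
apply: le_max2; first exact: excess_homothety_le.
exact: excess_to_homothety_le.
Qed.

End Distance.

Section Descent.
Context {R : realType} {X : normedModType R} {n : nat}.
Variables (M : 'I_n -> set X) (i0 : 'I_n).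
Hypotheses (M0 : forall i, M i !=set0) (Mbd : forall i, bounded_set (M i))
  (Mcv : forall i, @convex_set R X (M i)).

Lemma homothety_lowers_S_M {K rK} :
  K !=set0 -> closed K -> (forall k, K k -> `|k| <= rK) ->
  (forall i, (excess (M i) K < excess K (M i))%E) ->
  exists2 Y, PfCl (M i0) Y & (S_M M Y < \sum_(i < n) excess K (M i))%E.
Proof.
move=> K0 clK Kr exc_lt.
pose a i := fine (excess K (M i)); pose b i := fine (excess (M i) K).
have aE i : excess K (M i) = (a i)%:E.
  by have [rM Mr] := bounded_set_normP (Mbd i); rewrite fineK// (excess_fin_num Kr Mr).
have bE i : excess (M i) K = (b i)%:E.
  by have [rM Mr] := bounded_set_normP (Mbd i); rewrite fineK// (excess_fin_num Mr Kr).
have b_lt_a i : b i < a i by rewrite -lte_fin -aE -bE.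
have Kdist_le_a i k : K k -> rdist_pt k (M i) <= a i.
  by move=> Kk; apply: (rdist_pt_le_excess (M0 i) _ Kk); rewrite aE.
have [x Mx] := M0 i0.
have [p Kp xp] : exists2 p, K p & `|x - p| < a i0.
  apply: rdist_pt_lt => //; apply: le_lt_trans (b_lt_a i0).
  by apply: (rdist_pt_le_excess K0 _ Mx); rewrite bE.
have pM_lt : rdist_pt p (M i0) < a i0.
  by rewrite distrC in xp; exact: le_lt_trans (rdist_pt_le p Mx) xp.
have K_near_p k : K k -> `|k - p| <= rK + rK.
  by move=> Kk; apply: le_trans (ler_normB _ _) _; apply: lerD; apply: Kr.
have gap_gt0 i : 0 < a i - b i by rewrite subr_gt0.
have [t [/andP[t0 t1] tD]] := exists_small_pos (rK + rK) gap_gt0.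
pose e i := Num.max ((1 - t) * a i + t * rdist_pt p (M i)) (b i + t * (rK + rK)).
have hY i : (hausdorff (homothety K p t) (M i) <= (e i)%:E)%E.
  apply: (hausdorff_homothety_le p (Mcv i) (M0 i) K0 (ltW t0) (ltW t1) K_near_p).
    by rewrite aE.
  by rewrite bE.
have e_le_a i : e i <= a i.
  by rewrite ge_max; have := tD i; have := Kdist_le_a i p Kp; nra.
have e_lt_a : e i0 < a i0 by rewrite gt_max; have := tD i0; nra.
exists (homothety K p t).
  split; first by have [k0 Kk0] := K0; exists ((1 - t) *: k0 + t *: p), k0.
  split; first by apply: closed_homothety => //; rewrite lt_eqF.
  exact: le_lt_trans (hY i0) (ltry _).
apply: (@le_lt_trans _ _ (\sum_(i < n) (e i)%:E)); first exact: lee_sum.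
rewrite sumEFin (eq_bigr _ (fun i _ => aE i)) sumEFin lte_fin.
rewrite (bigD1 i0)// [ltRHS](bigD1 i0)//=.
by apply: ltr_leD => //; apply: ler_sum => i _; exact: e_le_a.
Qed.

End Descent.

Theorem mainTheorem18 (R : realType) (X : normedModType R) (n : nat)
  (hn : (0 < n)%N) (M : 'I_n -> set X)
  (hne : forall i, M i !=set0) (hcl : forall i, closed (M i))
  (hbd : forall i, bounded_set (M i)) (hcv : forall i, @convex_set R X (M i))
  (hSigma : Sigma M (M (Ordinal hn)) !=set0)
  (d : 'I_n -> \bar R) (hd : Omega M (M (Ordinal hn)) d) :
  forall K, Sigma_d M (M (Ordinal hn)) d K ->
  exists i : 'I_n, d i = ereal_sup [set dist_pt x K | x in M i].
Proof.
move=> K [[[K0 [clK KM1]] Kmin] <-]; apply: contrapT => no_i.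
have exc_lt i : (excess (M i) K < excess K (M i))%E.
  by apply: maxe_neqr => eq_i; apply: no_i; exists i.
have hausE i : hausdorff K (M i) = excess K (M i).
  by rewrite hausdorffE max_l// ltW.
have [rM1 M1r] := bounded_set_normP (hbd (Ordinal hn)).
have [rK Kr] : exists rK, forall k, K k -> `|k| <= rK.
  apply: (norm_bounded_of_excess K M1r (hne _)).
  by apply: le_lt_trans KM1; rewrite le_max lexx.
have [Y PY SY] := homothety_lowers_S_M M (Ordinal hn) hne hbd hcv K0 clK Kr exc_lt.
have SK : S_M M K = \sum_(i < n) excess K (M i).
  by apply: eq_bigr => i _; exact: hausE.
by have := Kmin Y PY; rewrite SK leNgt SY.
Qed.
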